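(* Let $\theta\in\mathrm{Irr}(N)$, let $N\le L\le\mathrm{Stab}_G(\tilde\theta)$ and $N\le K\le\mathrm{Stab}_G(\theta)$ with $L$ normalising $K$, let $\Gamma=\Gamma_{K,\tilde\theta}$, and let $\hat\theta$ be a strong extension of $\theta$ to $K$. Then the function $\bar\mu:L/N\to F_K/\Gamma$ associated with $\hat\theta$ is an element of $Z^1(L/N,F_K/\Gamma)$, and its class $[\bar\mu]\in H^1(L/N,F_K/\Gamma)$ is uniquely determined by $\tilde\theta$, i.e. it is independent of the choice of strong extension $\hat\theta$ and of the choice of representative $\theta\in\tilde\theta$.
   Context: $G$ is a profinite group, $N$ an open normal subgroup; $\mathrm{Irr}$, $\mathrm{Lin}$ denote continuous irreducible, resp. degree-one, complex characters; $\tilde\theta=\{\theta\psi|_N:\psi\in\mathrm{Lin}(G)\}$, and $G$ acts on classes via ${}^g\theta(n)=\theta(g^{-1}ng)$. A projective representation of $K$ is $\Pi:K\to\mathrm{GL}_m(\mathbb{C})$ with $\Pi(x)\Pi(y)=\alpha(x,y)\Pi(xy)$; its projective character is $\mathrm{Tr}\circ\Pi$. A strong extension of $\theta$ to $K$ is the projective character of a projective representation $\Pi$ of $K$ with $\Pi(xn)=\Pi(x)\Theta(n)$, $\Pi(nx)=\Theta(n)\Pi(x)$ ($x\in K,n\in N$), $\Theta$ affording $\theta$. $F_K$ is the abelian group (pointwise multiplication) of functions $K/N\to\mathbb{C}^\times$, an $L/N$-module via $(gN\cdot f)(xN)=f(g^{-1}xgN)$. $\Gamma_{K,\tilde\theta}=\{\nu\in\mathrm{Lin}(K/N):\hat\theta\,\varepsilon|_K=\hat\theta\,\nu\text{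 for some }\varepsilon\in\mathrm{Lin}(G)\}$, where $\mathrm{Lin}(K/N)$ are degree-one characters of $K$ trivial on $N$; it is an $L/N$-submodule of $F_K$. Definition of $\bar\mu$: for $g\in L$ choose $\psi_g\in\mathrm{Lin}(G)$ with ${}^g\theta=\theta\psi_g|_N$; then there is $\mu(gN)\in F_K$ with ${}^g\hat\theta=\hat\theta\,\psi_g|_K\,\mu(gN)$ (where ${}^g\hat\theta(x)=\hat\theta(g^{-1}xg)$), and $\bar\mu(gN)=\mu(gN)\Gamma$, which depends only on $gN$ and $\hat\theta$ (not on the choices made). *)

From HB Require Import structures.
From mathcomp Require Import all_boot all_order all_algebra.
From mathcomp Require Import all_classical all_reals topology.
From mathcomp Require Import complex.
Set Implicit Arguments. Unset Strict Implicit. Unset Printing Implicit Defensive.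
Import Order.TTheory GRing.Theory Num.Theory.
Local Open Scope ring_scope.
Local Open Scope classical_set_scope.

Definition is_profinite_group (G : topologicalType)
    (mul : G -> G -> G) (inv : G -> G) (one : G) : Prop :=
  [/\ (forall x y z, mul x (mul y z) = mul (mul x y) z),
      (forall x, mul one x = x /\ mul x one = x),
      (forall x, mul (inv x) x = one /\ mul x (inv x) = one),
      continuous (fun p : G * G => mul p.1 p.2) /\ continuous inv
    & [/\ compact [set: G], hausdorff_space G & totally_disconnected [set: G]]].

Record profiniteGroup := ProfiniteGroup {
  pg_carrier :> topologicalType;
  pg_mul : pg_carrier -> pg_carrier -> pg_carrier;
  pg_inv : pg_carrier -> pg_carrier;
  pg_one : pg_carrier;
  pg_axioms : is_profinite_group pg_mul pg_inv pg_one }.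

Section Profinite.
Variable G : profiniteGroup.
Local Notation gmul := (@pg_mul G).
Local Notation ginv := (@pg_inv G).
Local Notation gone := (@pg_one G).

Definition is_subgroup (H : set G) : Prop :=
  [/\ H gone, (forall x y, H x -> H y -> H (gmul x y)) & (forall x, H x -> H (ginv x))].

Definition pconj (x g : G) : G := gmul (ginv g) (gmul x g).

Definition is_normal_in (H K : set G) : Prop :=
  forall g x, K g -> H x -> H (pconj x g).

Definition open_normal_subgroup (N : set G) : Prop :=
  [/\ is_subgroup N, open N & is_normal_in N [set: G]].

Definition normalises (L K : set G) : Prop :=
  forall g, L g -> forall x, (K x <-> K (pconj x g)).

Variable R : realType.
Local Notation C := (R[i]).

Definition cont_on (A : set G) (f : G -> C) : Prop :=
  forall x, A x -> forall e : R, 0 < e ->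
    exists U : set G, [/\ open U, U x &
      forall y, A y -> U y -> `|f y - f x| < real_complex R e].

Definition is_rep (A : set G) (m : nat) (rho : G -> 'M[C]_m) : Prop :=
  [/\ (forall x y, A x -> A y -> rho (gmul x y) = rho x *m rho y),
      rho gone = 1%:M
    & forall i j, cont_on A (fun x => rho x i j)].

Definition is_irr_rep (A : set G) (m : nat) (rho : G -> 'M[C]_m) : Prop :=
  [/\ (0 < m)%N, is_rep A rho &
      forall U : 'M[C]_m, (forall x, A x -> stablemx U (rho x)) ->
        U = 0 \/ row_full U].

Definition affords (A : set G) (m : nat) (rho : G -> 'M[C]_m) (chi : G -> C) :=
  forall x, A x -> chi x = \tr (rho x).

(* theta in Irr(A): only the values on A matter *)
Definition is_irr_char (A : set G) (chi : G -> C) : Prop :=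
  exists m (rho : G -> 'M[C]_m), is_irr_rep A rho /\ affords A rho chi.

Definition is_lin_char (A : set G) (psi : G -> C) : Prop :=
  [/\ (forall x y, A x -> A y -> psi (gmul x y) = psi x * psi y),
      (forall x, A x -> psi x != 0) & cont_on A psi].

Definition is_lin_char_mod (K N : set G) (nu : G -> C) : Prop :=
  is_lin_char K nu /\ (forall n, N n -> nu n = 1).

Definition eqOn (A : set G) (f g : G -> C) : Prop := forall x, A x -> f x = g x.

Definition cact (g : G) (f : G -> C) : G -> C := fun x => f (pconj x g).

Definition in_tilde (N : set G) (theta phi : G -> C) : Prop :=
  exists psi, is_lin_char [set: G] psi /\ eqOn N phi (fun n => theta n * psi n).

Definition stab_char (N : set G) (theta : G -> C) : set G :=
  [set g | eqOn N (cact g theta) theta].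

Definition stab_tilde (N : set G) (theta : G -> C) : set G :=
  [set g | (forall phi, in_tilde N theta phi -> in_tilde N theta (cact g phi)) /\
           (forall phi, in_tilde N theta phi ->
              exists phi', in_tilde N theta phi' /\ eqOn N (cact g phi') phi)].

Definition strong_ext (N K : set G) (theta thetahat : G -> C) : Prop :=
  exists m (Pi Theta : G -> 'M[C]_m) (alpha : G -> G -> C),
    [/\ is_rep N Theta /\ affords N Theta theta,
        (forall x, K x -> Pi x \in unitmx),
        (forall x y, K x -> K y -> alpha x y != 0 /\
                      Pi x *m Pi y = alpha x y *: Pi (gmul x y)),
        (forall x n, K x -> N n ->
            Pi (gmul x n) = Pi x *m Theta n /\ Pi (gmul n x) = Theta n *m Pi x)
      & forall x, K x -> thetahat x = \tr (Pi x)].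

(* F_K: functions K/N -> C^x, seen as N-invariant nonvanishing functions on K *)
Definition in_FK (K N : set G) (f : G -> C) : Prop :=
  (forall x, K x -> f x != 0) /\ (forall x n, K x -> N n -> f (gmul x n) = f x).

Definition in_Gamma (K N : set G) (thetahat nu : G -> C) : Prop :=
  is_lin_char_mod K N nu /\
  exists eps, is_lin_char [set: G] eps /\
    eqOn K (fun x => thetahat x * eps x) (fun x => thetahat x * nu x).

Definition eq_mod_Gamma (K N : set G) (thetahat f f' : G -> C) : Prop :=
  exists nu, in_Gamma K N thetahat nu /\ eqOn K f (fun x => f' x * nu x).

Definition mu_data (N K L : set G) (theta thetahat : G -> C)
    (psi mu : G -> G -> C) : Prop :=
  forall g, L g ->
    [/\ is_lin_char [set: G] (psi g),
        eqOn N (cact g theta) (fun n => theta n * psi g n),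
        in_FK K N (mu g)
      & eqOn K (cact g thetahat) (fun x => thetahat x * psi g x * mu g x)].

End Profinite.

From HB Require Import structures.
From mathcomp Require Import all_boot all_order all_algebra.
From mathcomp Require Import all_classical all_reals topology.
From mathcomp Require Import complex.
From mathcomp Require Import normedtype.
From mathcomp Require Import zify ring.
Import Order.TTheory GRing.Theory Num.Theory.
Import numFieldTopology.Exports numFieldNormedType.Exports.
Local Open Scope ring_scope.
Local Open Scope classical_set_scope.

Set Implicit Arguments. Unset Strict Implicit. Unset Printing Implicit Defensive.

(** Since theta is irreducible, Burnside's theorem makes the matrices Theta(n),
    n in N, span the full matrix algebra.  The trace form then transports that
    algebra isomorphically onto the one spanned by any representation with the
    same character, and by Schur's lemma two projective extensions to K of
    representations with equal characters differ by a scalar function c on K,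
    which is N-invariant, and multiplicative when the two cocycles agree.
    Hence the strong extensions of theta psi|_N are the f psi thetahat with
    f in F_K, and an identity thetahat eps = thetahat f with eps in Lin(G),
    f in F_K forces f into Lin(K/N), i.e. f in Gamma.  The three claims reduce
    to identities of this shape, obtained by expanding ^(gn) thetahat (thetahat
    is invariant under conjugation by N), ^(gh) thetahat = ^h (^g thetahat) and
    ^g thetahat2 with thetahat2 = f psi thetahat. *)

Section MatrixFacts.
Variable F : fieldType.

Lemma vec_mx_mul_rows m k (f : 'I_k -> 'M[F]_m) (u : 'rV_k) :
  vec_mx (u *m \matrix_i mxvec (f i)) = \sum_i u 0 i *: f i.
Proof.
rewrite mulmx_sum_row linear_sum; apply: eq_bigr => i _.
by rewrite linearZ /= rowK mxvecK.
Qed.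

Lemma memmx_rowsP m k (f : 'I_k -> 'M[F]_m) X :
  reflect (exists a : 'I_k -> F, X = \sum_i a i *: f i)
          (X \in \matrix_i mxvec (f i))%MS.
Proof.
apply: (iffP submxP) => [[u eu] | [a ->]].
  by exists (fun i => u 0 i); rewrite -vec_mx_mul_rows -eu mxvecK.
exists (\row_i a i); apply: (can_inj vec_mxK); rewrite vec_mx_mul_rows mxvecK.
by apply: eq_bigr => i _; rewrite mxE.
Qed.

Lemma mxtrace_mul_delta m (X : 'M[F]_m) i j : \tr (X *m delta_mx j i) = X i j.
Proof.
rewrite /mxtrace (bigD1 i) //= big1 ?addr0.
  rewrite mxE (bigD1 j) //= big1 ?addr0; first by rewrite mxE !eqxx mulr1.
  by move=> l /negbTE nl; rewrite mxE nl mulr0.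
move=> l /negbTE nl; rewrite mxE big1 // => p _.
by rewrite mxE nl andbF mulr0.
Qed.

Lemma central_mx_is_scalar m (Z : 'M[F]_m) :
  (forall Y : 'M_m, Z *m Y = Y *m Z) -> is_scalar_mx Z.
Proof.
move=> cZ; rewrite /is_scalar_mx; case: insubP => // i0 _ _; apply/eqP.
have cZd a b i j : (Z *m delta_mx a b) i j = (delta_mx a b *m Z) i j by rewrite cZ.
apply/matrixP => i j; rewrite mxE; case: (eqVneq i j) => [<- | nij].
  have := cZd i i0 i i0; rewrite !mxE (bigD1 i) //= big1 ?addr0 => [|p /negbTE np].
    rewrite (bigD1 i0) //= big1 ?addr0 => [|p /negbTE np].
      by rewrite !mxE !eqxx mulr1 mul1r mulr1n => ->.
    by rewrite mxE np andbF mul0r.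
  by rewrite mxE np mulr0.
have := cZd j j i j; rewrite !mxE (bigD1 j) //= big1 ?addr0 => [|p /negbTE np].
  rewrite big1 => [|p _]; last by rewrite mxE (negbTE nij) mul0r.
  by rewrite mxE !eqxx mulr1 mulr0n.
by rewrite mxE np mulr0.
Qed.

Lemma unitmx_neq0 m (M : 'M[F]_m) : (0 < m)%N -> M \in unitmx -> M != 0.
Proof.
case: m M => // m M _; apply: contraTneq => ->.
by rewrite unitmxE det0 unitr0.
Qed.

Lemma scalemx_unit_inj m (M : 'M[F]_m) c d :
  (0 < m)%N -> M \in unitmx -> c *: M = d *: M -> c = d.
Proof.
move=> m_gt0 uM /eqP; rewrite -subr_eq0 -scalerBl scaler_eq0 subr_eq0.
by rewrite (negbTE (unitmx_neq0 m_gt0 uM)) orbF => /eqP.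
Qed.

Lemma exists_finite_span (X : Type) (P : X -> Prop) d (h : X -> 'rV[F]_d) :
  exists k (t : 'I_k -> X), (forall i, P (t i)) /\
    forall x, P x -> (h x <= \matrix_i h (t i))%MS.
Proof.
pose span k (t : 'I_k -> X) := \matrix_i h (t i).
have grow k (t : 'I_k -> X) x : (forall i, P (t i)) -> P x ->
    ~~ (h x <= span k t)%MS -> exists t' : 'I_k.+1 -> X,
    (forall i, P (t' i)) /\ (\rank (span k t) < \rank (span k.+1 t'))%N.
  move=> Pt Px nx; pose t' i := if unlift ord_max i is Some j then t j else x.
  have sub_t' i : (h (t' i) <= span k.+1 t')%MS.
    by rewrite -(rowK (fun i => h (t' i)) i) row_sub.
  have sub_t : (span k t <= span k.+1 t')%MS.
    apply/row_subP => j; rewrite rowK.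
    by have <- : t' (lift ord_max j) = t j by rewrite /t' liftK.
  exists t'; split=> [i|]; first by rewrite /t'; case: unliftP.
  have x_t' : (h x <= span k.+1 t')%MS.
    by have <- : t' ord_max = x by rewrite /t' unlift_none.
  by apply: rank_ltmx; rewrite ltmxE sub_t; apply: contra nx => /(submx_trans x_t').
suff: forall n k (t : 'I_k -> X), (forall i, P (t i)) ->
    (d - \rank (span k t) <= n)%N -> exists k (t : 'I_k -> X), (forall i, P (t i)) /\
    forall x, P x -> (h x <= span k t)%MS.
  have t0 (i : 'I_0) : X by have := ltn_ord i; rewrite ltn0.
  move=> /(_ d 0%N t0); apply=> [i|]; last by rewrite leq_subr.
  by have := ltn_ord i; rewrite ltn0.
elim=> [|n IH] k t Pt rkt; have [full | /existsNP [x /not_implyP [Px /negP nx]]] :=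
  pselect (forall x, P x -> (h x <= span k t)%MS); try by exists k, t.
all: have [t' [Pt' lt_rk]] := grow k t x Pt Px nx.
  by have := rank_leq_col (span k.+1 t'); lia.
apply: (IH _ t' Pt'); lia.
Qed.

End MatrixFacts.

Lemma exists_row_neq0 (F : fieldType) m n (A : 'M[F]_(m, n)) :
  A != 0 -> exists i, row i A != 0.
Proof.
move=> nzA; apply/existsP; apply: contraNT nzA => /existsPn rowA0.
by apply/eqP/row_matrixP => i; rewrite row0; apply/eqP/negbNE/rowA0.
Qed.

Section Burnside.
Variables (F : closedFieldType) (m k : nat) (E : 'A[F]_(k, m)).
Hypothesis m_gt0 : (0 < m)%N.
Hypothesis E1 : (1%:M \in E)%MS.
Hypothesis EM : forall X Y, (X \in E)%MS -> (Y \in E)%MS -> (X *m Y \in E)%MS.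
Hypothesis E_irr : forall U : 'M_m,
  (forall X, (X \in E)%MS -> stablemx U X) -> U = 0 \/ row_full U.

Lemma envelop_orbit (v : 'rV_m) : v != 0 ->
  forall w, exists2 X, (X \in E)%MS & w = v *m X.
Proof.
move=> nz_v w; pose V := E *m lin_mul_row v.
have memV X : (X \in E)%MS -> (v *m X <= V)%MS.
  by case/submxP => u eu; rewrite -mul_vec_lin_row eu -mulmxA submxMl.
have stV X : (X \in E)%MS -> stablemx <<V>>%MS X.
  move=> EX; rewrite genmxE (eqmxMr _ (genmxE _)); apply/row_subP => i.
  rewrite !row_mul -[row i E]vec_mxK.
  by rewrite mul_vec_lin_row -mulmxA memV // EM // vec_mxK row_sub.
have [V0 | fullV] := E_irr stV.
  by have := memV _ E1; rewrite mulmx1 -(genmxE V) V0 submx0 (negbTE nz_v).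
have /submxP [u ->] : (w <= V)%MS by rewrite -(genmxE V) submx_full.
exists (vec_mx (u *m E)); first by rewrite vec_mxK submxMl.
by rewrite -[v *m _]mul_vec_lin_row vec_mxK mulmxA.
Qed.

Lemma rank_le1_of_sandwich (T : 'M_m) :
  (forall X, (X \in E)%MS -> exists c, T *m X *m T = c *: T) -> (\rank T <= 1)%N.
Proof.
move=> sandwich; have [->|nzT] := eqVneq T 0; first by rewrite mxrank0.
have [i nz_Ti] := exists_row_neq0 nzT.
suff /mxrankS/leq_trans -> : (T <= row i T)%MS by rewrite ?rank_leq_row.
apply/row_subP => j; have [Y EY eY] := envelop_orbit nz_Ti (row j 1%:M).
have [c ec] := sandwich Y EY.
by rewrite -[T in row j T]mul1mx row_mul eY -!row_mul ec linearZ scalemx_sub.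
Qed.

(* If T X T is never a multiple of T, an eigenvector of X T in the row space of
   T is killed by T X T - c T, an element of E of smaller nonzero rank. *)
Lemma rank_descent (T : 'M_m) : (T \in E)%MS -> (1 < \rank T)%N ->
  exists2 T', (T' \in E)%MS & (0 < \rank T' < \rank T)%N.
Proof.
move=> ET rkT; have [X EX notsw] : exists2 X, (X \in E)%MS &
    forall c, T *m X *m T != c *: T.
  apply: contrapT => nX; move: rkT; rewrite ltnNge rank_le1_of_sandwich // => X EX.
  apply: contrapT => nc; apply: nX; exists X => // c.
  by apply/eqP => e; apply: nc; exists c.
pose V := row_base T; pose M := X *m T.
have stM : stablemx V M.
  by rewrite /M mulmxA (submx_trans (submxMl _ _)) ?eq_row_base.
have [c ec] : exists c, eigenvalue (conjmx V M) c.
  have /closed_rootP [c rc] : size (char_poly (conjmx V M)) != 1%N.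
    by rewrite size_char_poly eqSS -lt0n ltnW.
  by exists c; rewrite eigenvalue_root_char.
have [w /eigenspaceP ew nz_w] := eigenvalueP ec.
rewrite sub_eigenspace_conjmx ?row_base_free // in ew.
move/eigenspaceP: ew => ew.
have eT' : T *m X *m T - c *: T = T *m (M - c%:M).
  by rewrite mulmxBr mulmxA mul_mx_scalar.
exists (T *m X *m T - c *: T).
  rewrite linearB /= addmx_sub ?EM // -scaleN1r scalemx_sub //.
  by rewrite linearZ scalemx_sub.
have nzT' : T *m (M - c%:M) != 0 by rewrite -eT' subr_eq0.
have rkVK : \rank (T *m (M - c%:M)) = \rank (V *m (M - c%:M)).
  exact/eqmx_rank/eqmxP/(eqmxMr _ (eqmx_sym (eq_row_base T))).
have ker_nz : (0 < \rank (kermx (V *m (M - c%:M))))%N.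
  rewrite lt0n mxrank_eq0; apply: contraNneq nz_w => ker0.
  by rewrite -submx0 -ker0 sub_kermx mulmxA mulmxBr ew mul_mx_scalar subrr.
have rk_pos : (0 < \rank (V *m (M - c%:M)))%N by rewrite -rkVK lt0n mxrank_eq0.
by move: ker_nz; rewrite mxrank_ker eT' rkVK; lia.
Qed.

Lemma exists_rank1 : exists2 T, (T \in E)%MS & \rank T = 1%N.
Proof.
suff: forall r T, (T \in E)%MS -> (0 < \rank T <= r)%N ->
    exists2 T, (T \in E)%MS & \rank T = 1%N.
  by apply; [exact: E1 | rewrite mxrank1 m_gt0 /=].
elim=> [|r IH] T ET /andP [rk_gt0 rk_le]; first by lia.
have [rk_le1 | rk_gt1] := leqP (\rank T) 1; first by exists T => //; lia.
have [T' ET' /andP [rk'_gt0 rk'_lt]] := rank_descent ET rk_gt1.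
by apply: (IH T') => //; lia.
Qed.

(* For T = x *m y of rank one, the columns X *m x (X in E) span everything, as
   their annihilator is E-stable; then E contains X *m x *m (y *m Y) = delta_mx j l. *)
Theorem Burnside_envelop_full : row_full E.
Proof.
have [T ET rkT] := exists_rank1.
have nzT : T != 0 by rewrite -mxrank_eq0 rkT.
have [i0 nz_y] := exists_row_neq0 nzT; set y := row i0 T in nz_y.
have /submxP [x Txy] : (T <= y)%MS.
  have /leqifP := mxrank_leqif_sup (row_sub i0 T).
  by rewrite rank_rV nz_y rkT; case: ifP.
pose C : 'M_(m, k) := \matrix_(j, i) (vec_mx (row i E) *m x) j 0.
have CE (u : 'rV_k) : C *m u^T = vec_mx (u *m E) *m x.
  apply/matrixP => j l; rewrite ord1 mulmx_sum_row linear_sum mulmx_suml summxE mxE.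
  by apply: eq_bigr => i _; rewrite linearZ -scalemxAl !mxE mulrC.
have memE Y : (Y \in E)%MS -> exists u, Y = vec_mx (u *m E).
  by case/submxP => u /(canRL mxvecK); exists u.
have E_row i : (vec_mx (row i E) \in E)%MS by rewrite vec_mxK row_sub.
have C_entry (z : 'rV_m) i : (z *m C) 0 i = (z *m vec_mx (row i E) *m x) 0 0.
  by rewrite -mulmxA !mxE; apply: eq_bigr => j _; rewrite [C j i]mxE.
have stK X : (X \in E)%MS -> stablemx (kermx C) X.
  move=> EX; apply/row_subP => l; rewrite row_mul sub_kermx.
  have /eqP zC : row l (kermx C) *m C == 0 by rewrite -sub_kermx row_sub.
  apply/eqP/rowP => i; have [u eu] := memE _ (EM EX (E_row i)).
  by rewrite C_entry -(mulmxA _ X) eu -mulmxA -CE mulmxA zC mul0mx !mxE.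
have [K0 | Kfull] := E_irr stK; last first.
  have /eqP C0 : 1%:M *m C == 0 by rewrite -sub_kermx submx_full.
  have [u eu] := memE _ E1; move: nzT; rewrite Txy.
  have := CE u; rewrite -eu mul1mx -[C]mul1mx C0 !mul0mx => <-.
  by rewrite mul0mx eqxx.
have rkC : \rank C = m.
  by move: (mxrank_ker C); rewrite K0 mxrank0; have := rank_leq_row C; lia.
have colX j : exists2 X, (X \in E)%MS & X *m x = delta_mx j 0.
  have : ((delta_mx 0 j : 'rV_m) <= C^T)%MS.
    by rewrite submx_full // /row_full mxrank_tr rkC.
  case/submxP => u eu; exists (vec_mx (u *m E)); first by rewrite vec_mxK submxMl.
  by rewrite -CE -[C]trmxK -trmx_mul -eu trmx_delta.
have E_delta j l : (delta_mx j l \in E)%MS.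
  have [X EX eX] := colX j; have [Y EY eY] := envelop_orbit nz_y (delta_mx 0 l).
  rewrite -(mul_delta_mx (0 : 'I_1)) -eX eY mulmxA -(mulmxA X) -Txy.
  by rewrite EM // EM.
rewrite -sub1mx; apply/rV_subP => v _.
rewrite -[v]vec_mxK (matrix_sum_delta (vec_mx v)).
rewrite linear_sum; apply: summx_sub => j _; rewrite linear_sum.
apply: summx_sub => l _; rewrite linearZ /=; exact/scalemx_sub/E_delta.
Qed.

End Burnside.

Section Spanning.
Variables (F : fieldType) (T : Type) (N : T -> Prop).

Definition mx_spanning m (Th : T -> 'M[F]_m) :=
  exists k (t : 'I_k -> T),
    (forall i, N (t i)) /\ row_full (\matrix_i mxvec (Th (t i))).

Lemma mx_spanning_trace_nondegenerate m (Th : T -> 'M[F]_m) X :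
  mx_spanning Th -> (forall n, N n -> \tr (X *m Th n) = 0) -> X = 0.
Proof.
move=> [k [t [Nt full]]] trX0; apply/matrixP => i j; rewrite mxE -mxtrace_mul_delta.
have /memmx_rowsP [a ->] : (delta_mx j i \in \matrix_i mxvec (Th (t i)))%MS.
  exact: submx_full.
rewrite mulmx_sumr linear_sum big1 // => l _.
by rewrite -scalemxAr linearZ /= trX0 // mulr0.
Qed.

Lemma mx_spanning_scale m (Th : T -> 'M[F]_m) (chi : T -> F) :
  mx_spanning Th -> (forall n, N n -> chi n != 0) ->
  mx_spanning (fun n => chi n *: Th n).
Proof.
move=> [k [t [Nt full]]] chi_nz; exists k, t; split=> //.
rewrite -sub1mx; apply: submx_trans (_ : \matrix_i mxvec (Th (t i)) <= _)%MS.
  by rewrite sub1mx.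
apply/row_subP => i; rewrite rowK.
rewrite -[Th (t i)](scalerK (chi_nz _ (Nt i))) linearZ /= scalemx_sub //.
by rewrite -(rowK (fun i => mxvec (chi (t i) *: Th (t i))) i) row_sub.
Qed.

End Spanning.

Section IrreducibleSpanning.
Variables (F : closedFieldType) (T : Type) (mul : T -> T -> T) (one : T).
Variables (N : T -> Prop) (m : nat) (rho : T -> 'M[F]_m).
Hypothesis N1 : N one.
Hypothesis NM : forall x y, N x -> N y -> N (mul x y).
Hypothesis m_gt0 : (0 < m)%N.
Hypothesis rhoM : forall x y, N x -> N y -> rho (mul x y) = rho x *m rho y.
Hypothesis rho1 : rho one = 1%:M.
Hypothesis rho_irr : forall U : 'M_m,
  (forall x, N x -> stablemx U (rho x)) -> U = 0 \/ row_full U.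

Lemma irr_mx_spanning : mx_spanning N rho.
Proof.
have [k [t [Nt rhoE]]] := exists_finite_span N (fun n => mxvec (rho n)).
exists k, t; split=> //; set E := \matrix_i mxvec (rho (t i)) in rhoE *.
have E_mulr X n : (X \in E)%MS -> N n -> (X *m rho n \in E)%MS.
  move=> /memmx_rowsP [a ->] Nn; rewrite mulmx_suml linear_sum.
  apply: summx_sub => i _; rewrite -scalemxAl -(rhoM (Nt i) Nn) linearZ /=.
  by rewrite scalemx_sub // rhoE //; apply: NM.
apply: (Burnside_envelop_full m_gt0) => [|X Y EX /memmx_rowsP [b ->] | U stU].
- by rewrite -rho1 rhoE.
- rewrite mulmx_sumr linear_sum; apply: summx_sub => j _.
  by rewrite -scalemxAr linearZ scalemx_sub ?E_mulr.
- by apply: rho_irr => x Nx; apply: stU; apply: rhoE.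
Qed.

End IrreducibleSpanning.

Section Transport.
Variables (F : fieldType) (T : Type) (mul : T -> T -> T) (one : T) (N : T -> Prop).
Hypothesis N1 : N one.
Hypothesis NM : forall x y, N x -> N y -> N (mul x y).
Variables (m : nat) (Th1 Th2 : T -> 'M[F]_m).
Hypothesis Th1M : forall x y, N x -> N y -> Th1 (mul x y) = Th1 x *m Th1 y.
Hypothesis Th2M : forall x y, N x -> N y -> Th2 (mul x y) = Th2 x *m Th2 y.
Hypotheses (Th1_1 : Th1 one = 1%:M) (Th2_1 : Th2 one = 1%:M).
Hypothesis Th12_tr : forall n, N n -> \tr (Th1 n) = \tr (Th2 n).
Variables (k : nat) (t : 'I_k -> T).
Hypothesis Nt : forall i, N (t i).
Hypothesis t_spans : row_full (\matrix_i mxvec (Th1 (t i))).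

Local Notation B1 := (\matrix_i mxvec (Th1 (t i))).

(* The algebra isomorphism Th1 n |-> Th2 n, read off the coordinates of X on the
   spanning family Th1 (t i). *)
Definition transport (X : 'M[F]_m) : 'M_m :=
  \sum_i (mxvec X *m pinvmx B1) 0 i *: Th2 (t i).

Lemma transport_expand X : X = \sum_i (mxvec X *m pinvmx B1) 0 i *: Th1 (t i).
Proof.
have /(congr1 vec_mx) := mulmxKpV (submx_full (mxvec X) t_spans).
by rewrite vec_mx_mul_rows mxvecK => ->.
Qed.

Lemma mxtrace_transport_mul X n :
  N n -> \tr (transport X *m Th2 n) = \tr (X *m Th1 n).
Proof.
move=> Nn; rewrite [in RHS](transport_expand X) /transport !mulmx_suml !linear_sum.
apply: eq_bigr => i _; rewrite -!scalemxAl !linearZ /=.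
by rewrite -(Th1M (Nt i) Nn) -(Th2M (Nt i) Nn) (Th12_tr (NM (Nt i) Nn)).
Qed.

Lemma mxtrace_transport X : \tr (transport X) = \tr X.
Proof.
by have := mxtrace_transport_mul X N1; rewrite Th1_1 Th2_1 !mulmx1.
Qed.

Lemma transport_eq0 X : transport X = 0 -> X = 0.
Proof.
move=> tX0; apply: (@mx_spanning_trace_nondegenerate _ _ N _ Th1).
  by exists k, t.
by move=> n Nn; rewrite -mxtrace_transport_mul // tX0 mul0mx mxtrace0.
Qed.

Lemma transport_spanning : mx_spanning N Th2.
Proof.
exists k, t; split=> //; set B2 := \matrix_i mxvec (Th2 (t i)).
have vec_transport X : mxvec (transport X) = mxvec X *m (pinvmx B1 *m B2).
  by rewrite /transport -vec_mx_mul_rows vec_mxK mulmxA.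
have P_free : row_free (pinvmx B1 *m B2).
  apply/inj_row_free => v vP0.
  rewrite -[v]vec_mxK (transport_eq0 (X := vec_mx v)) ?linear0 //.
  by apply: (can_inj mxvecK); rewrite vec_transport vec_mxK vP0 linear0.
rewrite -sub1mx (submx_trans _ (submxMl (pinvmx B1) B2)) //.
by rewrite sub1mx row_full_unit -row_free_unit.
Qed.

Lemma transport_unique X Y :
  (forall n, N n -> \tr (Y *m Th2 n) = \tr (X *m Th1 n)) -> Y = transport X.
Proof.
move=> trY; apply/eqP; rewrite -subr_eq0; apply/eqP.
apply: (mx_spanning_trace_nondegenerate transport_spanning) => n Nn.
by rewrite mulmxBl linearB /= trY // mxtrace_transport_mul // subrr.
Qed.

Lemma transport_rep n : N n -> transport (Th1 n) = Th2 n.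
Proof.
move=> Nn; symmetry; apply: transport_unique => n' Nn'.
by rewrite -(Th1M Nn Nn') -(Th2M Nn Nn') (Th12_tr (NM Nn Nn')).
Qed.

Lemma transportZ a X : transport (a *: X) = a *: transport X.
Proof.
symmetry; apply: transport_unique => n Nn.
by rewrite -!scalemxAl !linearZ /= mxtrace_transport_mul.
Qed.

Lemma transport_mul X Y : transport (X *m Y) = transport X *m transport Y.
Proof.
symmetry; apply: transport_unique => n Nn.
have -> : transport Y = \sum_i (mxvec Y *m pinvmx B1) 0 i *: Th2 (t i) by [].
rewrite [in RHS](transport_expand Y) !mulmx_sumr !mulmx_suml !linear_sum /=.
apply: eq_bigr => i _; rewrite -!scalemxAr -!scalemxAl !linearZ /=.
rewrite -!mulmxA -(Th1M (Nt i) Nn) -(Th2M (Nt i) Nn).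
by rewrite (mxtrace_transport_mul _ (NM (Nt i) Nn)).
Qed.

Section ProjectiveExtension.
Variable K : T -> Prop.
Hypothesis KM : forall x y, K x -> K y -> K (mul x y).
Hypothesis NK : forall n, N n -> K n.
Hypothesis N_commute :
  forall x n, K x -> N n -> exists2 n', N n' & mul n x = mul x n'.
Hypothesis m_gt0 : (0 < m)%N.
Variables (Pi1 Pi2 : T -> 'M[F]_m).
Hypotheses (Pi1_unit : forall x, K x -> Pi1 x \in unitmx)
           (Pi2_unit : forall x, K x -> Pi2 x \in unitmx).
Hypothesis Pi1_ext : forall x n, K x -> N n ->
  Pi1 (mul x n) = Pi1 x *m Th1 n /\ Pi1 (mul n x) = Th1 n *m Pi1 x.
Hypothesis Pi2_ext : forall x n, K x -> N n ->
  Pi2 (mul x n) = Pi2 x *m Th2 n /\ Pi2 (mul n x) = Th2 n *m Pi2 x.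

Lemma transport_ext_central x (Z := transport (Pi1 x) *m invmx (Pi2 x)) :
  K x -> forall Y, Z *m Y = Y *m Z.
Proof.
move=> Kx; have uPx := Pi2_unit Kx.
have ZTh2 n : N n -> Z *m Th2 n = Th2 n *m Z.
  move=> Nn; have [n' Nn' nx] := N_commute Kx Nn.
  have PTh2 : Th2 n' *m invmx (Pi2 x) = invmx (Pi2 x) *m Th2 n.
    apply: (canRL (mulKmx uPx)); rewrite mulmxA -(proj1 (Pi2_ext Kx Nn')) -nx.
    by rewrite (proj2 (Pi2_ext Kx Nn)) mulmxK.
  rewrite /Z mulmxA -!mulmxA -PTh2 !mulmxA -transport_rep // -transport_mul.
  rewrite -(proj1 (Pi1_ext Kx Nn')) -nx (proj2 (Pi1_ext Kx Nn)).
  by rewrite transport_mul transport_rep.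
have [k2 [t2 [Nt2 t2_spans]]] := transport_spanning.
move=> Y; have /memmx_rowsP [a ->] := submx_full (mxvec Y) t2_spans.
rewrite mulmx_sumr mulmx_suml; apply: eq_bigr => i _.
by rewrite -scalemxAr -scalemxAl ZTh2.
Qed.

(* transport (Pi1 x) *m invmx (Pi2 x) is scalar (transport_ext_central), and
   this entry is the scalar. *)
Definition ext_ratio x : F :=
  (transport (Pi1 x) *m invmx (Pi2 x)) (Ordinal m_gt0) (Ordinal m_gt0).

Lemma transport_ext x : K x -> transport (Pi1 x) = ext_ratio x *: Pi2 x.
Proof.
move=> Kx; have /is_scalar_mxP [a eZ] :=
  central_mx_is_scalar (transport_ext_central Kx).
have -> : ext_ratio x = a by rewrite /ext_ratio eZ mxE eqxx mulr1n.
by rewrite -mul_scalar_mx -eZ mulmxKV // Pi2_unit.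
Qed.

Lemma ext_ratio_neq0 x : K x -> ext_ratio x != 0.
Proof.
move=> Kx; apply: contraTneq (unitmx_neq0 m_gt0 (Pi1_unit Kx)) => c0.
apply/negPn/eqP/transport_eq0.
by rewrite transport_ext // c0 scale0r.
Qed.

Lemma mxtrace_ext_ratio x : K x -> \tr (Pi1 x) = ext_ratio x * \tr (Pi2 x).
Proof.
by move=> Kx; rewrite -mxtrace_transport transport_ext // mxtraceZ.
Qed.

Lemma ext_ratio_mulN x n : K x -> N n -> ext_ratio (mul x n) = ext_ratio x.
Proof.
move=> Kx Nn; have Kxn := KM Kx (NK Nn).
apply: (scalemx_unit_inj m_gt0 (Pi2_unit Kxn)); rewrite -transport_ext //.
rewrite (proj1 (Pi1_ext Kx Nn)) transport_mul transport_rep // transport_ext //.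
by rewrite -scalemxAl -(proj1 (Pi2_ext Kx Nn)).
Qed.

Lemma ext_ratioM x y a : K x -> K y -> a != 0 ->
  Pi1 x *m Pi1 y = a *: Pi1 (mul x y) -> Pi2 x *m Pi2 y = a *: Pi2 (mul x y) ->
  ext_ratio (mul x y) = ext_ratio x * ext_ratio y.
Proof.
move=> Kx Ky a_nz Pi1xy Pi2xy; have Kxy := KM Kx Ky.
have := congr1 transport Pi1xy.
rewrite transport_mul transportZ !transport_ext //.
rewrite -scalemxAl -scalemxAr Pi2xy !scalerA.
move=> /(scalemx_unit_inj m_gt0 (Pi2_unit Kxy)) e; apply: (mulfI a_nz); rewrite -e; ring.
Qed.

End ProjectiveExtension.
End Transport.

Section ProfiniteGroupFacts.
Variable G : profiniteGroup.
Local Notation mul := (@pg_mul G).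
Local Notation inv := (@pg_inv G).
Local Notation one := (@pg_one G).
Implicit Types x y z g h n : G.

Lemma pg_mulA x y z : mul x (mul y z) = mul (mul x y) z.
Proof. by case: (pg_axioms G). Qed.

Lemma pg_mul1g x : mul one x = x.
Proof. by case: (pg_axioms G) => _ /(_ x) []. Qed.

Lemma pg_mulg1 x : mul x one = x.
Proof. by case: (pg_axioms G) => _ /(_ x) []. Qed.

Lemma pg_mulVg x : mul (inv x) x = one.
Proof. by case: (pg_axioms G) => _ _ /(_ x) []. Qed.

Lemma pg_mulgV x : mul x (inv x) = one.
Proof. by case: (pg_axioms G) => _ _ /(_ x) []. Qed.

Lemma pg_mulKVg x y : mul x (mul (inv x) y) = y.
Proof. by rewrite pg_mulA pg_mulgV pg_mul1g. Qed.

Lemma pg_invM x y : inv (mul x y) = mul (inv y) (inv x).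
Proof.
have e : mul (mul x y) (mul (inv y) (inv x)) = one.
  by rewrite -pg_mulA (pg_mulA y) pg_mulgV pg_mul1g pg_mulgV.
by rewrite -[inv (mul x y)]pg_mulg1 -e pg_mulA pg_mulVg pg_mul1g.
Qed.

Lemma pconjM x g h : pconj x (mul g h) = pconj (pconj x g) h.
Proof. by rewrite /pconj pg_invM -!pg_mulA. Qed.

Lemma pconj_mul x y g : pconj (mul x y) g = mul (pconj x g) (pconj y g).
Proof. by rewrite /pconj -!pg_mulA (pg_mulA g) pg_mulgV pg_mul1g. Qed.

Lemma mul_pconj n x : mul n x = mul x (pconj n x).
Proof. by rewrite /pconj pg_mulKVg. Qed.

Lemma pg_mul_continuous a : continuous (mul a).
Proof.
move=> y; have pair_cont : {for y, continuous (fun z : G => (a, z))}.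
  by apply: cvg_pair; [exact: cvg_cst | exact: cvg_id].
have mul_cont : continuous (fun p : G * G => mul p.1 p.2).
  by case: (pg_axioms G) => _ _ _ [].
exact: (continuous_comp pair_cont (mul_cont _)).
Qed.

Lemma cont_on_invariant (R : realType) (N A : set G) (f : G -> R[i]) :
  open N -> N one -> (forall x n, A x -> N n -> f (mul x n) = f x) -> cont_on A f.
Proof.
move=> oN N1 fN x Ax e e_gt0; exists (mul (inv x) @^-1` N); split.
- by move/continuousP: (@pg_mul_continuous (inv x)); apply.
- by rewrite /= pg_mulVg.
- move=> y Ay /= Ny; rewrite -(pg_mulKVg x y) fN // subrr normr0.
  by rewrite ltcE /= eqxx e_gt0.
Qed.

End ProfiniteGroupFacts.

Section Characters.
Variables (G : profiniteGroup) (R : realType).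
Local Notation mul := (@pg_mul G).
Local Notation one := (@pg_one G).
Implicit Types (x g n : G) (psi f : G -> R[i]).

(* R[i] is given the norm topology of a numFieldType. *)
Lemma cont_onT f :
  cont_on [set: G] f <-> continuous (f : G -> (R[i] : numFieldType)).
Proof.
split=> [cf x | cf x _ e e_gt0].
  apply/cvgrPdist_lt => -[a b]; rewrite ltcE /= => /andP [/eqP -> a_gt0].
  have [U [oU Ux fU]] := cf x I a a_gt0.
  apply: filterS (open_nbhs_nbhs (conj oU Ux)) => y Uy.
  by rewrite distrC; apply: fU.
have := cf x; move/cvgrPdist_lt => /(_ (real_complex R e)).
rewrite ltcR => /(_ e_gt0); rewrite nbhsE => -[U [oU Ux] fU].
by exists U; split=> // y _ Uy; rewrite distrC; exact: fU.
Qed.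

Lemma lin_char1 psi : is_lin_char [set: G] psi -> psi one = 1.
Proof.
case=> psiM psi_nz _; have := psiM one one I I; rewrite pg_mul1g => e.
by apply: (mulfI (psi_nz one I)); rewrite -e mulr1.
Qed.

Lemma lin_charJ psi x g : is_lin_char [set: G] psi -> psi (pconj x g) = psi x.
Proof.
move=> psi_lin; have [psiM _ _] := psi_lin.
by rewrite /pconj !psiM // mulrCA -psiM // pg_mulVg lin_char1 // mulr1.
Qed.

Lemma lin_charM psi1 psi2 : is_lin_char [set: G] psi1 -> is_lin_char [set: G] psi2 ->
  is_lin_char [set: G] (fun x => psi1 x * psi2 x).
Proof.
move=> [M1 nz1 /cont_onT c1] [M2 nz2 /cont_onT c2]; split.
- by move=> x y _ _; rewrite M1 // M2 // mulrACA.
- by move=> x _; rewrite mulf_neq0 ?nz1 ?nz2.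
- by apply/cont_onT => x; exact: (continuousM (c1 x) (c2 x)).
Qed.

Lemma lin_charV psi : is_lin_char [set: G] psi ->
  is_lin_char [set: G] (fun x => (psi x)^-1).
Proof.
move=> [psiM psi_nz /cont_onT psi_c]; split.
- by move=> x y _ _; rewrite psiM // invfM.
- by move=> x _; rewrite invr_eq0 psi_nz.
- by apply/cont_onT => x; exact: (continuousV (psi_nz x I) (psi_c x)).
Qed.

Variables (N K : set G).

Lemma in_FK_mul f1 f2 : in_FK K N f1 -> in_FK K N f2 ->
  in_FK K N (fun x => f1 x * f2 x).
Proof.
move=> [nz1 N1] [nz2 N2]; split=> [x Kx | x n Kx Nn].
  by rewrite mulf_neq0 ?nz1 ?nz2.
by rewrite N1 // N2.
Qed.

Lemma in_FK_inv f : in_FK K N f -> in_FK K N (fun x => (f x)^-1).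
Proof.
by move=> [nz fN]; split=> [x Kx | x n Kx Nn]; rewrite ?invr_eq0 ?nz // fN.
Qed.

Lemma in_FK_conj f g : (forall x, K x -> K (pconj x g)) ->
  (forall n, N n -> N (pconj n g)) -> in_FK K N f -> in_FK K N (fun x => f (pconj x g)).
Proof.
move=> Kg Ng [nz fN]; split=> [x Kx | x n Kx Nn]; first exact/nz/Kg.
by rewrite pconj_mul (fN _ _ (Kg x Kx) (Ng n Nn)).
Qed.

End Characters.

Section StrongExtension.
Variables (G : profiniteGroup) (R : realType) (N K : set G).
Hypotheses (hN : open_normal_subgroup N) (hK : is_subgroup K) (hNK : N `<=` K).
Local Notation mul := (@pg_mul G).
Local Notation inv := (@pg_inv G).
Local Notation one := (@pg_one G).
Local Notation C := R[i].
Implicit Types (theta thetahat eps f : G -> C).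

Let N1 : N one. Proof. by case: hN => -[]. Qed.
Let NM x y : N x -> N y -> N (mul x y).
Proof. by case: hN => -[_ NM _] _ _; apply: NM. Qed.
Let N_conj n g : N n -> N (pconj n g).
Proof. by case: hN => _ _ Nn; apply: Nn. Qed.
Let Ninv n : N n -> N (inv n).
Proof. by case: hN => -[_ _ Ninv] _ _; apply: Ninv. Qed.
Let KM x y : K x -> K y -> K (mul x y).
Proof. by case: hK => _ KM _; apply: KM. Qed.
Let N_commute x n : K x -> N n -> exists2 n', N n' & mul n x = mul x n'.
Proof. by move=> _ Nn; exists (pconj n x); [exact: N_conj | exact: mul_pconj]. Qed.

Lemma irr_char_rep_spanning theta m (Th : G -> 'M[C]_m) :
  is_irr_char N theta -> is_rep N Th -> affords N Th theta ->
  (0 < m)%N /\ mx_spanning N Th.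
Proof.
move=> [m' [rho [[m'_gt0 [rhoM rho1 _] rho_irr] aff_rho]]] [ThM Th1 _] aff_Th.
have tr_rho_Th n : N n -> \tr (rho n) = \tr (Th n).
  by move=> Nn; rewrite -aff_rho -?aff_Th.
have em : m' = m.
  apply/eqP; rewrite -(eqr_nat C) -(mxtrace1 _ m') -(mxtrace1 _ m) -rho1 -Th1.
  by rewrite tr_rho_Th.
subst m'; split=> //.
have [k [t [Nt t_spans]]] := irr_mx_spanning N1 NM m'_gt0 rhoM rho1 rho_irr.
exact: (transport_spanning NM rhoM ThM tr_rho_Th Nt t_spans).
Qed.

Lemma proj_ext_twist_ratio psi m (Th Th' Pi Pi' : G -> 'M[C]_m) :
  is_lin_char [set: G] psi -> (0 < m)%N -> mx_spanning N Th ->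
  (forall x y, N x -> N y -> Th (mul x y) = Th x *m Th y) -> Th one = 1%:M ->
  (forall x y, N x -> N y -> Th' (mul x y) = Th' x *m Th' y) -> Th' one = 1%:M ->
  (forall n, N n -> \tr (Th' n) = psi n * \tr (Th n)) ->
  (forall x, K x -> Pi x \in unitmx) -> (forall x, K x -> Pi' x \in unitmx) ->
  (forall x n, K x -> N n ->
     Pi (mul x n) = Pi x *m Th n /\ Pi (mul n x) = Th n *m Pi x) ->
  (forall x n, K x -> N n ->
     Pi' (mul x n) = Pi' x *m Th' n /\ Pi' (mul n x) = Th' n *m Pi' x) ->
  exists c : G -> C, [/\ forall x, K x -> c x != 0,
    forall x, K x -> \tr (Pi' x) = c x * (psi x * \tr (Pi x)),
    forall x n, K x -> N n -> c (mul x n) = c x &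
    forall x y a, K x -> K y -> a != 0 ->
      Pi' x *m Pi' y = a *: Pi' (mul x y) -> Pi x *m Pi y = a *: Pi (mul x y) ->
      c (mul x y) = c x * c y].
Proof.
move=> psi_lin m_gt0 spTh ThM Th1 Th'M Th'1 trTh' Piu Pi'u PiN Pi'N.
have [[psiM psi_nz _] psi1] := (psi_lin, lin_char1 psi_lin).
pose Th2 n := psi n *: Th n; pose Pi2 x := psi x *: Pi x.
have scaleM (A B : 'M[C]_m) x y :
    psi (mul x y) *: (A *m B) = psi x *: A *m (psi y *: B).
  by rewrite psiM // -scalemxAl -scalemxAr scalerA.
have Th2M x y : N x -> N y -> Th2 (mul x y) = Th2 x *m Th2 y.
  by move=> Nx Ny; rewrite /Th2 ThM // scaleM.
have Th2_1 : Th2 one = 1%:M by rewrite /Th2 psi1 Th1 scale1r.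
have tr12 n : N n -> \tr (Th' n) = \tr (Th2 n) by move=> Nn; rewrite trTh' // mxtraceZ.
have Pi2u x : K x -> Pi2 x \in unitmx by move=> Kx; rewrite unitmxZ ?Piu ?unitfE ?psi_nz.
have Pi2N x n : K x -> N n ->
    Pi2 (mul x n) = Pi2 x *m Th2 n /\ Pi2 (mul n x) = Th2 n *m Pi2 x.
  by move=> Kx Nn; rewrite /Pi2 /Th2 -!scaleM; have [-> ->] := PiN x n Kx Nn.
have [k [t [Nt t_spans]]] : mx_spanning N Th'.
  have [k [t [Nt t_spans]]] := mx_spanning_scale spTh (fun n _ => psi_nz n I).
  exact: (transport_spanning NM Th2M Th'M (fun n Nn => esym (tr12 n Nn)) Nt t_spans).
exists (ext_ratio Th' Th2 t m_gt0 Pi' Pi2); split.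
- exact: (ext_ratio_neq0 NM Th'M Th2M tr12 Nt t_spans N_commute
            m_gt0 Pi'u Pi2u Pi'N Pi2N).
- move=> x Kx; rewrite -mxtraceZ.
  exact: (mxtrace_ext_ratio N1 NM Th'M Th2M Th'1 Th2_1 tr12 Nt t_spans N_commute
            m_gt0 Pi2u Pi'N Pi2N Kx).
- exact: (ext_ratio_mulN NM Th'M Th2M tr12 Nt t_spans KM hNK N_commute
            m_gt0 Pi2u Pi'N Pi2N).
- move=> x y a Kx Ky a_nz Pi'xy Pixy.
  apply: (ext_ratioM NM Th'M Th2M tr12 Nt t_spans KM N_commute m_gt0 Pi2u Pi'N Pi2N
            Kx Ky a_nz Pi'xy).
  by rewrite /Pi2 -scaleM Pixy scalerA mulrC -scalerA.
Qed.

Lemma irr_char1_neq0 theta : is_irr_char N theta -> theta one != 0.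
Proof.
move=> [m [rho [[m_gt0 [_ rho1 _] _] aff_rho]]].
by rewrite aff_rho // rho1 mxtrace1 pnatr_eq0 -lt0n.
Qed.

Lemma strong_ext_conjN theta thetahat : strong_ext N K theta thetahat ->
  forall y n, K y -> N n -> thetahat (pconj y n) = thetahat y.
Proof.
move=> [m [Pi [Th [al [[[ThM Th1 _] _] _ _ PiN trPi]]]]] y n Ky Nn.
have Kyn : K (mul y n) by apply/KM/hNK.
have Kc : K (pconj y n) by apply/KM/Kyn/hNK/Ninv.
rewrite !trPi // /pconj (proj2 (PiN _ _ Kyn (Ninv Nn))).
rewrite (proj1 (PiN _ _ Ky Nn)) mxtrace_mulC -mulmxA -(ThM _ _ Nn (Ninv Nn)).
by rewrite pg_mulgV Th1 mulmx1.
Qed.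

Lemma strong_ext_restrict theta thetahat : strong_ext N K theta thetahat ->
  exists2 a, a != 0 & forall n, N n -> thetahat n = a * theta n.
Proof.
move=> [m [Pi [Th [al [[_ affTh] Piu Pial PiN trPi]]]]].
have K1 := hNK N1; have [a_nz] := Pial _ _ K1 K1; rewrite pg_mul1g => Pi11.
have Pi1 : Pi one = al one one *: 1%:M.
  apply: (row_full_inj (A := Pi one)); first by rewrite row_full_unit Piu.
  by rewrite Pi11 -scalemxAr mulmx1.
exists (al one one) => // n Nn; rewrite trPi; last exact: hNK.
rewrite -{1}(pg_mul1g n) (proj1 (PiN _ _ K1 Nn)) Pi1 -scalemxAl mul1mx mxtraceZ.
by rewrite affTh.
Qed.

Lemma strong_ext_lin_eq_on_N theta thetahat eps f :
  is_irr_char N theta -> strong_ext N K theta thetahat ->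
  is_lin_char [set: G] eps -> in_FK K N f ->
  eqOn K (fun x => thetahat x * eps x) (fun x => thetahat x * f x) ->
  f one = 1 /\ forall n, N n -> eps n * theta n = theta n.
Proof.
move=> irr ext eps_lin [_ fN] e; have [a a_nz hatN] := strong_ext_restrict ext.
have hat1_nz : thetahat one != 0 by rewrite (hatN _ N1) mulf_neq0 // irr_char1_neq0.
have f1 : f one = 1.
  have := e one (hNK N1); rewrite (lin_char1 eps_lin) mulr1 -{1}[thetahat one]mulr1.
  by move/(mulfI hat1_nz).
split=> // n Nn; have fn : f n = 1 by rewrite -(pg_mul1g n) (fN _ _ (hNK N1) Nn).
have := e n (hNK Nn); rewrite fn mulr1 hatN // -mulrA (mulrC (theta n)).
by move/(mulfI a_nz).
Qed.

Lemma strong_ext_Gamma theta thetahat eps f :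
  is_irr_char N theta -> strong_ext N K theta thetahat ->
  is_lin_char [set: G] eps -> in_FK K N f ->
  eqOn K (fun x => thetahat x * eps x) (fun x => thetahat x * f x) ->
  in_Gamma K N thetahat f.
Proof.
move=> irr ext eps_lin f_FK e.
have [f1 eps_theta] := strong_ext_lin_eq_on_N irr ext eps_lin f_FK e.
move: ext => [m [Pi [Th [al [[repTh affTh] Piu Pial PiN trPi]]]]].
have [m_gt0 spTh] := irr_char_rep_spanning irr repTh affTh.
have [[ThM Th1 _] [f_nz fN]] := (repTh, f_FK).
have tr_eps n : N n -> \tr (Th n) = eps n * \tr (Th n).
  by move=> Nn; rewrite -affTh // eps_theta.
have [c [c_nz trc cN cM]] := proj_ext_twist_ratio eps_lin m_gt0 spTh ThM Th1 ThM Th1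
  tr_eps Piu Piu PiN PiN.
have fK x : K x -> f x = (c x)^-1.
  (* Pi x is invertible, so thetahat cannot vanish on the whole coset x N. *)
  move=> Kx; have [n Nn tr_nz] : exists2 n, N n & \tr (Pi (mul x n)) != 0.
    apply: contrapT => tr0; case/negP: (unitmx_neq0 m_gt0 (Piu x Kx)); apply/eqP.
    apply: (mx_spanning_trace_nondegenerate spTh) => n Nn.
    rewrite -(proj1 (PiN x n Kx Nn)); apply: contrapT => /eqP tr_nz.
    by apply: tr0; exists n.
  have Kxn := KM Kx (hNK Nn); rewrite -(fN x n Kx Nn) -(cN x n Kx Nn).
  have := e _ Kxn; rewrite trPi // => /(mulfI tr_nz) <-.
  have := trc _ Kxn; rewrite mulrA -{1}[\tr _]mul1r => /(mulIf tr_nz) ce.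
  by rewrite -[(c _)^-1]mulr1 ce mulKf // c_nz.
split; last by exists eps.
split; [split=> [x y Kx Ky | x Kx | ] | move=> n Nn].
- have [al_nz Pixy] := Pial x y Kx Ky.
  rewrite (fK _ (KM Kx Ky)) (fK _ Kx) (fK _ Ky).
  by rewrite (cM _ _ _ Kx Ky al_nz Pixy Pixy) invfM.
- exact: f_nz.
- by case: hN => _ oN _; apply: cont_on_invariant oN N1 fN.
- by rewrite -(pg_mul1g n) (fN _ _ (hNK N1) Nn).
Qed.

Lemma strong_ext_unique theta thetahat theta2 thetahat2 psi :
  is_irr_char N theta -> strong_ext N K theta thetahat ->
  is_lin_char [set: G] psi -> eqOn N theta2 (fun n => theta n * psi n) ->
  strong_ext N K theta2 thetahat2 ->
  exists2 f0, in_FK K N f0 & eqOn K thetahat2 (fun x => f0 x * (psi x * thetahat x)).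
Proof.
move=> irr [m [Pi [Th [al [[repTh affTh] Piu _ PiN trPi]]]]] psi_lin theta2E.
move=> [m2 [Pi2 [Th2 [al2 [[[Th2M Th2_1 _] affTh2] Pi2u _ Pi2N trPi2]]]]].
have [m_gt0 spTh] := irr_char_rep_spanning irr repTh affTh.
have [ThM Th1 _] := repTh.
have em : m2 = m.
  apply/eqP; rewrite -(eqr_nat C) -(mxtrace1 _ m2) -(mxtrace1 _ m) -Th2_1 -Th1.
  by rewrite -affTh2 // -affTh // theta2E // (lin_char1 psi_lin) mulr1.
subst m2; have trTh2 n : N n -> \tr (Th2 n) = psi n * \tr (Th n).
  by move=> Nn; rewrite -affTh2 // -affTh // theta2E // mulrC.
have [c [c_nz trc cN _]] := proj_ext_twist_ratio psi_lin m_gt0 spTh ThM Th1 Th2M Th2_1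
  trTh2 Piu Pi2u PiN Pi2N.
by exists c => [|x Kx]; [split | rewrite trPi2 // trPi // trc].
Qed.

End StrongExtension.

Section Proposition.
Variables (G : profiniteGroup) (R : realType) (N K L : set G).
Variables (theta thetahat : G -> R[i]) (psi mu : G -> G -> R[i]).
Hypotheses (hN : open_normal_subgroup N) (htheta : is_irr_char N theta).
Hypotheses (hK : is_subgroup K) (hL : is_subgroup L) (hNK : N `<=` K) (hNL : N `<=` L).
Hypotheses (hLK : normalises L K) (hext : strong_ext N K theta thetahat).
Hypothesis hmu : mu_data N K L theta thetahat psi mu.
Local Notation mul := (@pg_mul G).
Local Notation C := R[i].

Let LM g h : L g -> L h -> L (mul g h). Proof. by case: hL => _ LM _; apply: LM. Qed.
Let K_conj g : L g -> forall x, K x -> K (pconj x g).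
Proof. by move=> Lg x Kx; have [+ _] := @hLK g Lg x; apply. Qed.
Let N_conj g : forall n, N n -> N (pconj n g).
Proof. by case: hN => _ _ Nn n; apply: Nn. Qed.
Arguments K_conj : clear implicits.
Arguments N_conj : clear implicits.

Lemma eq_mod_Gamma_of_lin (a b f f' : G -> C) :
  is_lin_char [set: G] a -> is_lin_char [set: G] b -> in_FK K N f -> in_FK K N f' ->
  eqOn K (fun x => thetahat x * a x * f x) (fun x => thetahat x * b x * f' x) ->
  eq_mod_Gamma K N thetahat f f'.
Proof.
move=> a_lin b_lin f_FK f'_FK e; have [[_ a_nz _] [f'_nz _]] := (a_lin, f'_FK).
exists (fun x => f x / f' x); split; last by move=> x Kx; rewrite mulrC divfK ?f'_nz.
apply: (strong_ext_Gamma hN hK hNK htheta hext (lin_charM b_lin (lin_charV a_lin))).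
  exact: (in_FK_mul f_FK (in_FK_inv f'_FK)).
move=> x Kx; have [ax_nz f'x_nz] := (a_nz x I, f'_nz x Kx).
apply: (mulIf (mulf_neq0 ax_nz f'x_nz)).
have -> : thetahat x * (b x / a x) * (a x * f' x) = thetahat x * b x * f' x by field.
by rewrite -(e x Kx); field.
Qed.

Lemma mu_bar_well_defined g n : L g -> N n ->
  eq_mod_Gamma K N thetahat (mu (mul g n)) (mu g).
Proof.
move=> Lg Nn; have Lgn := LM Lg (hNL Nn).
have [psi_g_lin _ mu_g_FK mu_gE] := hmu Lg.
have [psi_gn_lin _ mu_gn_FK mu_gnE] := hmu Lgn.
apply: (eq_mod_Gamma_of_lin psi_gn_lin psi_g_lin mu_gn_FK mu_g_FK) => x Kx.
rewrite -mu_gnE // -mu_gE // /cact pconjM.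
exact: (strong_ext_conjN hN hK hNK hext (K_conj g Lg x Kx) Nn).
Qed.

Lemma mu_bar_cocycle g h : L g -> L h ->
  eq_mod_Gamma K N thetahat (mu (mul g h)) (fun x => mu g x * mu h (pconj x g)).
Proof.
move=> Lg Lh; have Lgh := LM Lg Lh.
have [psi_g_lin _ mu_g_FK mu_gE] := hmu Lg.
have [psi_h_lin _ mu_h_FK mu_hE] := hmu Lh.
have [psi_gh_lin _ mu_gh_FK mu_ghE] := hmu Lgh.
apply: (eq_mod_Gamma_of_lin psi_gh_lin (lin_charM psi_g_lin psi_h_lin) mu_gh_FK).
  exact: (in_FK_mul mu_g_FK (in_FK_conj (K_conj g Lg) (N_conj g) mu_h_FK)).
move=> x Kx; rewrite -mu_ghE // /cact pconjM.
have := mu_hE _ (K_conj g Lg x Kx); rewrite /cact => ->.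
have := mu_gE _ Kx; rewrite /cact => ->.
by rewrite (lin_charJ _ _ psi_h_lin); ring.
Qed.

Lemma mu_bar_class_independent theta2 thetahat2 psi2 mu2 :
  in_tilde N theta theta2 -> strong_ext N K theta2 thetahat2 ->
  mu_data N K L theta2 thetahat2 psi2 mu2 ->
  exists f, in_FK K N f /\ forall g, L g ->
    eq_mod_Gamma K N thetahat (mu2 g) (fun x => mu g x * f (pconj x g) / f x).
Proof.
move=> [ps [ps_lin theta2E]] ext2 hmu2.
have [f0 f0_FK hat2E] := strong_ext_unique hN hK hNK htheta hext ps_lin theta2E ext2.
exists f0; split=> // g Lg.
have [psi_g_lin _ mu_g_FK mu_gE] := hmu Lg.
have [psi2_g_lin _ mu2_g_FK mu2_gE] := hmu2 g Lg.
apply: (eq_mod_Gamma_of_lin psi2_g_lin psi_g_lin mu2_g_FK).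
  apply: in_FK_mul (in_FK_inv f0_FK).
  exact: (in_FK_mul mu_g_FK (in_FK_conj (K_conj g Lg) (N_conj g) f0_FK)).
move=> x Kx; have [[_ ps_nz _] [f0_nz _]] := (ps_lin, f0_FK).
have := mu2_gE x Kx; rewrite /cact (hat2E _ (K_conj g Lg x Kx)) hat2E //.
rewrite (lin_charJ _ _ ps_lin).
have := mu_gE x Kx; rewrite /cact => -> e.
apply: (mulfI (mulf_neq0 (f0_nz x Kx) (ps_nz x I))).
have -> : f0 x * ps x * (thetahat x * psi2 g x * mu2 g x) =
          f0 x * (ps x * thetahat x) * psi2 g x * mu2 g x by ring.
by rewrite -e; field; rewrite f0_nz.
Qed.

End Proposition.

Theorem proposition2p9 (G : profiniteGroup) (R : realType)
  (N K L : set G) (theta thetahat : G -> R[i])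
  (hN : open_normal_subgroup N)
  (htheta : is_irr_char N theta)
  (hK : is_subgroup K) (hL : is_subgroup L)
  (hNK : N `<=` K) (hKst : K `<=` stab_char N theta)
  (hNL : N `<=` L) (hLst : L `<=` stab_tilde N theta)
  (hLK : normalises L K)
  (hext : strong_ext N K theta thetahat)
  (psi mu : G -> G -> R[i])
  (hmu : mu_data N K L theta thetahat psi mu) :
  (* mu-bar is well defined on L/N *)
  (forall g n, L g -> N n ->
     eq_mod_Gamma K N thetahat (mu (pg_mul g n)) (mu g)) /\
  (* mu-bar is a 1-cocycle: mu(gh) = mu(g) . (g . mu(h))  mod Gamma *)
  (forall g h, L g -> L h ->
     eq_mod_Gamma K N thetahat (mu (pg_mul g h))
       (fun x => mu g x * mu h (pconj x g))) /\
  (* the class [mu-bar] in H^1 depends only on theta~ *)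
  (forall (theta2 thetahat2 : G -> R[i]) (psi2 mu2 : G -> G -> R[i]),
     in_tilde N theta theta2 ->
     strong_ext N K theta2 thetahat2 ->
     mu_data N K L theta2 thetahat2 psi2 mu2 ->
     exists f, in_FK K N f /\
       forall g, L g ->
         eq_mod_Gamma K N thetahat (mu2 g)
           (fun x => mu g x * f (pconj x g) / f x)).
Proof.
split; [|split].
- by move=> g n Lg Nn; apply: (mu_bar_well_defined hN htheta hK hL hNK hNL hLK hext hmu).
- by move=> g h Lg Lh; apply: (mu_bar_cocycle hN htheta hK hL hNK hLK hext hmu).
- exact: (mu_bar_class_independent hN htheta hK hNK hLK hext hmu).
Qed.
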